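(* Let $z_1,z_2,z_3,z_4\in\mathbb{C}$ be the vertices of a convex quadrilateral, labelled in cyclic order around its boundary. For $j\neq k$ put $z_{jk}=z_k-z_j$, $r_{jk}=|z_{jk}|$, and let $At=At(z_1,z_2,z_3,z_4)$ be the (planar) Atiyah determinant of these points. Let the angles $\alpha_j,\beta_j,\gamma_j$ ($j=1,\dots,4$, indices mod $4$) be $$\alpha_j=\angle z_{j+1}z_jz_{j+2},\qquad \beta_j=\angle z_{j+2}z_jz_{j-1},\qquad \gamma_j=\angle z_{j-1}z_jz_{j+1}.$$ Define $$S_1=\sum_{j=1}^4(\cos\alpha_j+\cos\beta_j+\cos\gamma_j),\qquad S_2=\sum_{j=1}^4(\cos\alpha_j+\cos\beta_j+\cos\gamma_j)(\cos\alpha_{j+1}+\cos\gamma_{j+2}+\cos\beta_{j+3}),$$ and $$E=2\sum_{j=1}^4\Big(\sin\alpha_j\sin\alpha_{j+1}+\sin\beta_j\sin\beta_{j+1}-\sin\gamma_j\sin\alpha_{j+1}-\sin\gamma_{j+1}\sin\beta_j+\sin\gamma_j\sin\alpha_{j+2}+\sin\gamma_j\sin\beta_{j+2}\Big)$$ $$\qquad-4\sum_{j=1}^4\sin\alpha_{j+1}\sin\beta_j+4\sin\gamma_1\sin\gamma_3+4\sin\gamma_2\sin\gamma_4 .$$ Then $$At=r_{12}r_{13}r_{14}r_{23}r_{24}r_{34}\,\big(24+8S_1+2S_2+E\big).$$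
   Context: Planar Atiyah determinant: identify the plane containing the points with $\{0\}\times\mathbb{C}\subset\mathbb{R}\times\mathbb{C}=\mathbb{R}^3$. For distinct $z_1,\dots,z_4\in\mathbb{C}$ and $j\ne k$ let $z_{jk}=z_k-z_j$, $r_{jk}=|z_{jk}|$, $u_{jk}=z_{jk}/r_{jk}$. For an ''observer'' $k$ and another point $j\neq k$ define the vector $w_{kj}=(x_{kj},y_{kj})\in\mathbb{C}^2$ (a Hopf lift of $z_{kj}$) by $w_{kj}=\sqrt{r_{kj}}\,(1,\overline{u}_{kj})$ if $k<j$ and $w_{kj}=\sqrt{r_{kj}}\,(u_{kj},1)$ if $k>j$. Let $C_k\in\mathbb{C}^4$ be the vector of coefficients of $1,t,t^2,t^3$ in the polynomial $\prod_{j\neq k}(x_{kj}+y_{kj}t)$ (the symmetric tensor product of the three vectors $w_{kj}$). The Atiyah determinant $At(z_1,\dots,z_4)$ is the determinant of the $4\times4$ matrix whose $k$-th column is $C_k$; it is a real number for planar points. Angles $\angle XYZ\in[0,\pi]$ denote the usual unsigned angle at $Y$. *)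

From HB Require Import structures.
From mathcomp Require Import all_boot all_order all_algebra.
From mathcomp Require Import complex.
From mathcomp Require Import reals trigo.
Set Implicit Arguments. Unset Strict Implicit. Unset Printing Implicit Defensive.
Import Order.TTheory GRing.Theory Num.Theory.
Local Open Scope ring_scope.
Local Open Scope complex_scope.

Section Atiyah.
Variable R : realType.

(* the four points, cyclically indexed: index 0,1,2,3 = z_1,z_2,z_3,z_4 *)
Definition cyc (z1 z2 z3 z4 : R[i]) (j : nat) : R[i] :=
  nth 0 [:: z1; z2; z3; z4] (j %% 4).

Definition cabs (z : R[i]) : R := Num.sqrt (complex.Re z ^+ 2 + complex.Im z ^+ 2).

Definition hopf_lift (k j : nat) (zk zj : R[i]) : R[i] * R[i] :=
  let d := zj - zk in
  let r := cabs d in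
  let u := d / r%:C in
  let s := (Num.sqrt r)%:C in
  if (k < j)%N then (s, s * u^*) else (s * u, s).

Definition atiyah_poly (z : nat -> R[i]) (k : 'I_4) : {poly R[i]} :=
  \prod_(j < 4 | j != k)
     ((hopf_lift k j (z k) (z j)).1%:P + (hopf_lift k j (z k) (z j)).2%:P * 'X).

Definition atiyah_det (z : nat -> R[i]) : R[i] :=
  \det (\matrix_(i < 4, k < 4) (atiyah_poly z k)`_i).

Definition cross (a b : R[i]) : R := complex.Re a * complex.Im b - complex.Im a * complex.Re b.

(* z(0..3) are the vertices of a (non-degenerate) convex quadrilateral
   listed in cyclic order: for each edge z_j z_{j+1}, the two remaining
   vertices lie strictly on the same side (the same side for all edges,
   i.e. a consistent orientation s = +1 or -1). *)
Definition convex_quad (z : nat -> R[i]) : Prop :=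
  exists s : R, (s = 1 \/ s = -1) /\
    forall j m : nat, (m = 2 \/ m = 3)%N ->
      0 < s * cross (z (j + 1)%N - z j) (z (j + m)%N - z j).

Definition angle (X Y Z : R[i]) : R :=
  acos ((complex.Re (X - Y) * complex.Re (Z - Y) + complex.Im (X - Y) * complex.Im (Z - Y))
          / (cabs (X - Y) * cabs (Z - Y))).

(* 0-based versions of alpha_j, beta_j, gamma_j (j-1 = j+3 mod 4) *)
Definition alpha (z : nat -> R[i]) (j : nat) : R :=
  angle (z (j + 1)%N) (z j) (z (j + 2)%N).
Definition beta (z : nat -> R[i]) (j : nat) : R :=
  angle (z (j + 2)%N) (z j) (z (j + 3)%N).
Definition gamma (z : nat -> R[i]) (j : nat) : R :=
  angle (z (j + 3)%N) (z j) (z (j + 1)%N).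

Definition S1 (z : nat -> R[i]) : R :=
  \sum_(j < 4) (cos (alpha z j) + cos (beta z j) + cos (gamma z j)).

Definition S2 (z : nat -> R[i]) : R :=
  \sum_(j < 4) ((cos (alpha z j) + cos (beta z j) + cos (gamma z j))
     * (cos (alpha z (j + 1)%N) + cos (gamma z (j + 2)%N)
        + cos (beta z (j + 3)%N))).

Definition Eterm (z : nat -> R[i]) : R :=
  2 * (\sum_(j < 4)
        (sin (alpha z j) * sin (alpha z (j + 1)%N)
         + sin (beta z j) * sin (beta z (j + 1)%N)
         - sin (gamma z j) * sin (alpha z (j + 1)%N)
         - sin (gamma z (j + 1)%N) * sin (beta z j)
         + sin (gamma z j) * sin (alpha z (j + 2)%N)
         + sin (gamma z j) * sin (beta z (j + 2)%N)))
  - 4 * (\sum_(j < 4) sin (alpha z (j + 1)%N) * sin (beta z j))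
  + 4 * sin (gamma z 0) * sin (gamma z 2)
  + 4 * sin (gamma z 1) * sin (gamma z 3).

End Atiyah.

From HB Require Import structures.
From mathcomp Require Import all_boot all_order all_algebra.
From mathcomp Require Import complex.
From mathcomp Require Import boolp reals trigo.
From mathcomp Require Import ring lra zify.
Import Order.TTheory GRing.Theory Num.Theory.
Local Open Scope ring_scope.
Local Open Scope complex_scope.
Set Implicit Arguments. Unset Strict Implicit.

(* Each Hopf lift w_{kj} is sqrt(r_{kj}) times a vector depending only on the
   unit direction u_{kj}, and each r_{jk} enters two columns, so the
   determinant is r_12 r_13 r_14 r_23 r_24 r_34 times a rational function of
   the six unit directions.  At a vertex j, the angle between the directions
   to two other vertices a, b is encoded by w = u_ja^-1 u_jb (as |u| = 1):
   cos = (w + w^-1)/2 and i sin = +-(w - w^-1)/2, so the theorem becomes a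
   field identity in the u's.  Convexity fixes the signs: all triangles of
   vertices have the same orientation s = +-1, so every sine is
   -s i (w - w^-1)/2, and (s i)^2 = -1. *)

Section DeterminantExpansion.
Variable F : comPzRingType.

Definition minor_fun (f : nat -> nat -> F) (j0 a b : nat) : F := f a.+1 (bump j0 b).

Lemma det_mx_fun_expand n (f : nat -> nat -> F) :
  \det (\matrix_(i < n.+1, j < n.+1) f i j) =
  \sum_(j < n.+1) (-1) ^+ j * f 0%N j * \det (\matrix_(a < n, b < n) minor_fun f j a b).
Proof.
rewrite (expand_det_row _ ord0); apply: eq_bigr => j _.
rewrite mxE /cofactor add0n mulrCA mulrA.
by congr (_ * _ * \det _); apply/matrixP => a b; rewrite !mxE.
Qed.

End DeterminantExpansion.

Section AtiyahForms.
Variable F : pzRingType.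
Implicit Types ca cb cg sa sb sg : nat -> F.

Definition cos_part ca cb cg : F :=
  24 + 8 * (\sum_(j < 4) (ca j + cb j + cg j))
  + 2 * (\sum_(j < 4) ((ca j + cb j + cg j)
     * (ca (j + 1)%N + cg (j + 2)%N + cb (j + 3)%N))).

Definition sin_part sa sb sg : F :=
  2 * (\sum_(j < 4)
        (sa j * sa (j + 1)%N + sb j * sb (j + 1)%N
         - sg j * sa (j + 1)%N - sg (j + 1)%N * sb j
         + sg j * sa (j + 2)%N + sg j * sb (j + 2)%N))
  - 4 * (\sum_(j < 4) sa (j + 1)%N * sb j)
  + 4 * sg 0%N * sg 2%N + 4 * sg 1%N * sg 3%N.

End AtiyahForms.

Lemma rmorph_cos_part (F G : pzRingType) (f : {rmorphism F -> G}) (ca cb cg : nat -> F) :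
  f (cos_part ca cb cg) = cos_part (f \o ca) (f \o cb) (f \o cg).
Proof.
rewrite /cos_part !big_ord_recl !big_ord0 /=.
by rewrite !(rmorphD, rmorphM, rmorph_nat, rmorph0).
Qed.

Lemma rmorph_sin_part (F G : pzRingType) (f : {rmorphism F -> G}) (sa sb sg : nat -> F) :
  f (sin_part sa sb sg) = sin_part (f \o sa) (f \o sb) (f \o sg).
Proof.
rewrite /sin_part !big_ord_recl !big_ord0 /=.
by rewrite !(rmorphD, rmorphB, rmorphN, rmorphM, rmorph_nat, rmorph0).
Qed.

Lemma sin_partZ (F : comPzRingType) (k : F) (sa sb sg : nat -> F) :
  sin_part (fun j => k * sa j) (fun j => k * sb j) (fun j => k * sg j) =
  k ^+ 2 * sin_part sa sb sg.
Proof. by rewrite /sin_part !big_ord_recl !big_ord0 /=; ring. Qed.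

Section LiftDeterminant.
Variable F : fieldType.

Definition linear3_coefs (l1 l2 l3 : F * F) : seq F :=
  let: (a1, b1) := l1 in let: (a2, b2) := l2 in let: (a3, b3) := l3 in
  [:: a1 * a2 * a3; b1 * a2 * a3 + a1 * b2 * a3 + a1 * a2 * b3;
      b1 * b2 * a3 + b1 * a2 * b3 + a1 * b2 * b3; b1 * b2 * b3].

Lemma coef_linear3 (l1 l2 l3 : F * F) i :
  ((l1.1%:P + l1.2%:P * 'X) * ((l2.1%:P + l2.2%:P * 'X) * (l3.1%:P + l3.2%:P * 'X)))`_i
  = nth 0 (linear3_coefs l1 l2 l3) i.
Proof.
case: l1 l2 l3 => [a1 b1] [a2 b2] [a3 b3] /=.
have -> : (a1%:P + b1%:P * 'X) * ((a2%:P + b2%:P * 'X) * (a3%:P + b3%:P * 'X)) =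
  (a1 * a2 * a3)%:P + (b1 * a2 * a3 + a1 * b2 * a3 + a1 * a2 * b3)%:P * 'X
  + (b1 * b2 * a3 + b1 * a2 * b3 + a1 * b2 * b3)%:P * 'X^2 + (b1 * b2 * b3)%:P * 'X^3.
  rewrite !polyCD !polyCM.
  move: (a1%:P) (a2%:P) (a3%:P) (b1%:P) (b2%:P) (b3%:P) ('X : {poly F}) => ? ? ? ? ? ? ?.
  ring.
rewrite !coefD !coefCM !coefC coefX !coefXn.
by case: i => [|[|[|[|i]]]] /=; [ring | ring | ring | ring | rewrite nth_nil; ring].
Qed.

Definition lift_column (w : nat -> nat -> F * F) (k : nat) : seq F :=
  linear3_coefs (w k (bump k 0)) (w k (bump k 1)) (w k (bump k 2)).

Definition lift_det (w : nat -> nat -> F * F) : F :=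
  \det (\matrix_(i < 4, k < 4) nth 0 (lift_column w k) i).

Variables u q : nat -> nat -> F.

(* u a b (a < b) stands for the unit direction from point a to point b and
   q a b for the square root of their distance; dir a b is the direction from
   a to b for arbitrary indices, read modulo 4 *)
Definition dir (a b : nat) : F :=
  if (a %% 4 < b %% 4)%N then u (a %% 4) (b %% 4) else - u (b %% 4) (a %% 4).

Definition cos_dir (j a b : nat) : F := ((dir j a)^-1 * dir j b + dir j a / dir j b) / 2.

Definition isin_dir (j a b : nat) : F := ((dir j a)^-1 * dir j b - dir j a / dir j b) / 2.

Definition dir_lift (k j : nat) : F * F :=
  if (k < j)%N then (q k j, q k j / u k j) else (- (q j k * u j k), q j k).

Lemma lift_det_dir : (2 : F) != 0 ->
  u 0 1 != 0 -> u 0 2 != 0 -> u 0 3 != 0 -> u 1 2 != 0 -> u 1 3 != 0 -> u 2 3 != 0 ->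
  lift_det dir_lift =
  (q 0 1 * q 0 2 * q 0 3 * q 1 2 * q 1 3 * q 2 3) ^+ 2 *
  (cos_part (fun j => cos_dir j (j + 1) (j + 2)) (fun j => cos_dir j (j + 2) (j + 3))
            (fun j => cos_dir j (j + 1) (j + 3))
   - sin_part (fun j => isin_dir j (j + 1) (j + 2)) (fun j => isin_dir j (j + 2) (j + 3))
              (fun j => isin_dir j (j + 1) (j + 3))).
Proof.
move=> h2 h01 h02 h03 h12 h13 h23.
rewrite /lift_det (@det_mx_fun_expand _ 3 (fun i k => nth 0 (lift_column dir_lift k) i)).
rewrite !(det_mx_fun_expand, big_ord_recl, big_ord0, det_mx00).
rewrite /cos_part /sin_part !big_ord_recl !big_ord0.
rewrite /minor_fun /lift_column /linear3_coefs /dir_lift /cos_dir /isin_dir /dir.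
rewrite /bump /addn /modn /=.
by field; rewrite !oppr_eq0 h2 h01 h02 h03 h12 h13 h23.
Qed.

End LiftDeterminant.

Section PlaneGeometry.
Variable R : realType.
Implicit Types (a b : R[i]) (x y : R).

Local Notation Re := complex.Re.
Local Notation Im := complex.Im.

Definition dotc a b : R := Re a * Re b + Im a * Im b.

Definition unitc a : R[i] := a / (cabs a)%:C.

Lemma realcM x y : (x * y)%:C = x%:C * y%:C :> R[i].
Proof. exact: rmorphM. Qed.

Lemma realcD x y : (x + y)%:C = x%:C + y%:C :> R[i].
Proof. exact: rmorphD. Qed.

Lemma cabsC a : (cabs a)%:C = `|a|.
Proof. by rewrite normc_def. Qed.

Lemma cabs_ge0 a : 0 <= cabs a.
Proof. exact: sqrtr_ge0. Qed.

Lemma cabs_gt0 a : (0 < cabs a) = (a != 0).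
Proof. by rewrite -ltcR cabsC normr_gt0. Qed.

Lemma cabsN a : cabs (- a) = cabs a.
Proof. by apply: complexI; rewrite !cabsC normrN. Qed.

Lemma cabs_sqr a : cabs a ^+ 2 = Re a ^+ 2 + Im a ^+ 2.
Proof. by rewrite /cabs sqr_sqrtr // addr_ge0 // sqr_ge0. Qed.

Lemma unitcN a : unitc (- a) = - unitc a.
Proof. by rewrite /unitc cabsN mulNr. Qed.

Lemma dotc_cross_sqr a b : dotc a b ^+ 2 + cross a b ^+ 2 = (cabs a * cabs b) ^+ 2.
Proof. by rewrite exprMn !cabs_sqr /dotc /cross; ring. Qed.

Lemma cross_pos_neq0 (s : R) a b : 0 < s * cross a b -> a != 0 /\ b != 0.
Proof.
by move=> pos; split; apply: contraTneq pos => ->; rewrite /cross /= ?(mul0r, mulr0, subr0, ltxx).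
Qed.

Lemma angleC (X Y Z : R[i]) : angle X Y Z = angle Z Y X.
Proof.
by rewrite /angle [Re (X - Y) * _]mulrC [Im (X - Y) * _]mulrC [cabs (X - Y) * _]mulrC.
Qed.

Lemma unitc_inv a : a != 0 -> (unitc a)^-1 = (unitc a)^*.
Proof.
move=> a0; rewrite invc_norm /unitc normf_div -cabsC ger0_norm ?ler0c ?cabs_ge0 //.
by rewrite divff ?expr1n ?invr1 ?mul1r // cabsC normr_eq0.
Qed.

Lemma unitc_ratio a b :
  (unitc a)^* * unitc b =
  (dotc a b / (cabs a * cabs b)) +i* (cross a b / (cabs a * cabs b)).
Proof.
rewrite /unitc -!fmorphV invfM /dotc /cross.
move: (cabs a)^-1 (cabs b)^-1 => ra rb.
by case: a => a1 a2; case: b => b1 b2 /=; congr (_ +i* _); ring.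
Qed.

Lemma unitc_ratio_sqr a b : a != 0 -> b != 0 ->
  (dotc a b / (cabs a * cabs b)) ^+ 2 + (cross a b / (cabs a * cabs b)) ^+ 2 = 1.
Proof.
rewrite -!cabs_gt0 => a0 b0.
have ab0 : (cabs a * cabs b) ^+ 2 != 0 by rewrite expf_neq0 // mulf_neq0 // gt_eqF.
by rewrite !expr_div_n -mulrDl dotc_cross_sqr divff.
Qed.

Lemma unitc_div a b : b != 0 -> unitc a / unitc b = ((unitc a)^* * unitc b)^*.
Proof.
move=> b0; rewrite unitc_inv //.
by case: (unitc a) => ? ?; case: (unitc b) => ? ? /=; congr (_ +i* _); ring.
Qed.

Lemma cos_angle (X Y Z : R[i]) : X != Y -> Z != Y ->
  (cos (angle X Y Z))%:C =
  ((unitc (X - Y))^-1 * unitc (Z - Y) + unitc (X - Y) / unitc (Z - Y)) / 2.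
Proof.
rewrite -(subr_eq0 X) -(subr_eq0 Z) => a0 b0.
have := unitc_ratio_sqr a0 b0.
rewrite (unitc_inv a0) (unitc_div _ b0) -ReJ_add unitc_ratio.
set c := dotc _ _ / _; set t := cross _ _ / _ => ct1.
rewrite /angle -/(dotc _ _) -/c acosK //.
by rewrite in_itv /=; apply/andP; split; nra.
Qed.

Lemma sin_angle (X Y Z : R[i]) (s : R) : s = 1 \/ s = -1 ->
  0 < s * cross (X - Y) (Z - Y) ->
  (sin (angle X Y Z))%:C =
  - (s%:C * 'i) * (((unitc (X - Y))^-1 * unitc (Z - Y) - unitc (X - Y) / unitc (Z - Y)) / 2).
Proof.
move=> s1 pos.
have [a0 b0] := cross_pos_neq0 pos.
have := unitc_ratio_sqr a0 b0.
rewrite (unitc_inv a0) (unitc_div _ b0) subcJ unitc_ratio.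
set c := dotc _ _ / _; set t := cross _ _ / _ => ct1.
have st : 0 < s * t by rewrite /t mulrA divr_gt0 // mulr_gt0 ?cabs_gt0.
rewrite /angle -/(dotc _ _) -/c sin_acos; last by apply/andP; split; nra.
have -> : 1 - c ^+ 2 = (s * t) ^+ 2 by case: s1 => ->; lra.
rewrite sqrtr_sqr gtr0_norm // rmorphM /=.
rewrite [2 * _ * _ / 2]mulrAC [2 * _ / 2]mulrAC divff ?pnatr_eq0 // mul1r.
by rewrite mulNr mulrACA -expr2 sqr_i mulrN1 opprK.
Qed.

Lemma unitc_eq0 a : (unitc a == 0) = (a == 0).
Proof. by rewrite /unitc mulf_eq0 invr_eq0 cabsC normr_eq0 orbb. Qed.

Lemma cross_shift a b c : cross (c - b) (a - b) = cross (b - a) (c - a).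
Proof. by case: a b c => [a1 a2] [b1 b2] [c1 c2]; rewrite /cross /=; ring. Qed.

End PlaneGeometry.

Lemma atiyah_det_lift (R : realType) (z : nat -> R[i]) (w : nat -> nat -> R[i] * R[i]) :
  (forall k j, (k < 4)%N -> (j < 4)%N -> k != j -> hopf_lift k j (z k) (z j) = w k j) ->
  atiyah_det z = lift_det w.
Proof.
move=> hw; rewrite /atiyah_det /lift_det; congr (\det _); apply/matrixP => i k.
rewrite !mxE /atiyah_poly (eq_bigr (fun j : 'I_4 => (w k j).1%:P + (w k j).2%:P * 'X)).
  rewrite /lift_column big_mkcond !big_ord_recl big_ord0 /=.
  by case: k => [[|[|[|[|k]]]] hk] //=; rewrite !mul1r !mulr1 coef_linear3.
by move=> j jk; rewrite hw // eq_sym.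
Qed.

Section ConvexQuadrilateral.
Variable R : realType.
Variable z : nat -> R[i].
Hypothesis z_mod : forall n, z (n %% 4) = z n.

Definition unit_dir (a b : nat) : R[i] := unitc (z b - z a).
Definition sqrt_dist (a b : nat) : R[i] := (Num.sqrt (cabs (z b - z a)))%:C.

Lemma dir_unit_dir a b : dir unit_dir a b = unitc (z b - z a).
Proof. by rewrite /dir /unit_dir !z_mod; case: ltnP => _ //; rewrite -unitcN opprB. Qed.

Lemma cos_angle_dir j a b : z a != z j -> z b != z j ->
  (cos (angle (z a) (z j) (z b)))%:C = cos_dir unit_dir j a b.
Proof. by move=> ha hb; rewrite cos_angle // /cos_dir !dir_unit_dir. Qed.

Lemma sin_angle_dir j a b (s : R) : s = 1 \/ s = -1 ->
  0 < s * cross (z a - z j) (z b - z j) ->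
  (sin (angle (z a) (z j) (z b)))%:C = - (s%:C * 'i) * isin_dir unit_dir j a b.
Proof. by move=> s1 pos; rewrite (sin_angle s1 pos) /isin_dir !dir_unit_dir. Qed.

Lemma hopf_lift_unit_dir k j : z k != z j ->
  hopf_lift k j (z k) (z j) = dir_lift unit_dir sqrt_dist k j.
Proof.
move=> kj; rewrite /hopf_lift /dir_lift /unit_dir /sqrt_dist -(opprB (z j)) cabsN.
case: ltnP => _ /=; last by rewrite unitcN mulrN opprK.
by rewrite unitc_inv // subr_eq0 eq_sym.
Qed.

Lemma sqrt_dist_sqr a b : sqrt_dist a b ^+ 2 = (cabs (z b - z a))%:C.
Proof. by rewrite -rmorphXn sqr_sqrtr // cabs_ge0. Qed.

Variable s : R.
Hypothesis s_sign : s = 1 \/ s = -1.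
Hypothesis convex : forall j m : nat, (m = 2 \/ m = 3)%N ->
  0 < s * cross (z (j + 1)%N - z j) (z (j + m)%N - z j).

Lemma convex_alpha j : 0 < s * cross (z (j + 1)%N - z j) (z (j + 2)%N - z j).
Proof. exact: convex (or_introl erefl). Qed.

Lemma convex_gamma j : 0 < s * cross (z (j + 1)%N - z j) (z (j + 3)%N - z j).
Proof. exact: convex (or_intror erefl). Qed.

Lemma convex_beta j : 0 < s * cross (z (j + 2)%N - z j) (z (j + 3)%N - z j).
Proof.
have := convex_alpha (j + 2); rewrite -!addnA /= -(z_mod (j + 4)) modnDr z_mod.
by rewrite cross_shift.
Qed.

Lemma quad_neq_shift j d : (d %% 4 != 0)%N -> z (j + d) != z j.
Proof.
rewrite -z_mod -modnDmr z_mod -subr_eq0.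
have : (d %% 4 < 4)%N by rewrite ltn_mod.
case: (d %% 4)%N => [|[|[|[|]]]] // _ _.
- by case: (cross_pos_neq0 (convex_alpha j)).
- by case: (cross_pos_neq0 (convex_alpha j)).
- by case: (cross_pos_neq0 (convex_gamma j)).
Qed.

Lemma quad_neq k j : (k < 4)%N -> (j < 4)%N -> k != j -> z k != z j.
Proof.
move=> k4 j4 kj.
have -> : z j = z (k + (j + 4 - k)) by rewrite -(z_mod (_ + _)) -(z_mod j); congr z; lia.
by rewrite eq_sym quad_neq_shift //; lia.
Qed.

Lemma cos_part_angles :
  (cos_part (fun j => cos (alpha z j)) (fun j => cos (beta z j)) (fun j => cos (gamma z j)))%:C
  = cos_part (fun j => cos_dir unit_dir j (j + 1) (j + 2))
      (fun j => cos_dir unit_dir j (j + 2) (j + 3)) (fun j => cos_dir unit_dir j (j + 1) (j + 3)).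
Proof.
rewrite rmorph_cos_part; apply: f_equal3; apply: funext => j /=.
- by rewrite cos_angle_dir ?quad_neq_shift.
- by rewrite cos_angle_dir ?quad_neq_shift.
- by rewrite /gamma angleC cos_angle_dir ?quad_neq_shift.
Qed.

Lemma sin_part_angles :
  (sin_part (fun j => sin (alpha z j)) (fun j => sin (beta z j)) (fun j => sin (gamma z j)))%:C
  = - sin_part (fun j => isin_dir unit_dir j (j + 1) (j + 2))
      (fun j => isin_dir unit_dir j (j + 2) (j + 3)) (fun j => isin_dir unit_dir j (j + 1) (j + 3)).
Proof.
have si2 : (- (s%:C * 'i)) ^+ 2 = -1 :> R[i].
  have s2 : s ^+ 2 = 1 by case: s_sign => ->; rewrite ?sqrrN expr1n.
  by rewrite sqrrN exprMn sqr_i -rmorphXn s2 rmorph1 mul1r.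
rewrite -mulN1r -si2 -sin_partZ rmorph_sin_part.
apply: f_equal3; apply: funext => j /=.
- exact: sin_angle_dir (convex_alpha j).
- exact: sin_angle_dir (convex_beta j).
- by rewrite /gamma angleC; exact: sin_angle_dir (convex_gamma j).
Qed.

Lemma atiyah_det_convex_quad :
  atiyah_det z =
  (cabs (z 1%N - z 0%N) * cabs (z 2%N - z 0%N) * cabs (z 3%N - z 0%N)
   * cabs (z 2%N - z 1%N) * cabs (z 3%N - z 1%N) * cabs (z 3%N - z 2%N)
   * (cos_part (fun j => cos (alpha z j)) (fun j => cos (beta z j)) (fun j => cos (gamma z j))
      + sin_part (fun j => sin (alpha z j)) (fun j => sin (beta z j))
          (fun j => sin (gamma z j))))%:C.
Proof.
have dir_neq0 a b : (a < 4)%N -> (b < 4)%N -> a != b -> unit_dir a b != 0.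
  by move=> a4 b4 ab; rewrite unitc_eq0 subr_eq0 eq_sym quad_neq.
rewrite (@atiyah_det_lift _ _ (dir_lift unit_dir sqrt_dist)); last first.
  by move=> k j k4 j4 kj; rewrite hopf_lift_unit_dir // quad_neq.
rewrite lift_det_dir ?pnatr_eq0 ?dir_neq0 // !exprMn !sqrt_dist_sqr !realcM.
by rewrite realcD cos_part_angles sin_part_angles.
Qed.

End ConvexQuadrilateral.

Theorem theorem1 (R : realType) (z1 z2 z3 z4 : R[i]) :
  convex_quad (cyc z1 z2 z3 z4) ->
  atiyah_det (cyc z1 z2 z3 z4) =
    (cabs (z2 - z1) * cabs (z3 - z1) * cabs (z4 - z1)
     * cabs (z3 - z2) * cabs (z4 - z2) * cabs (z4 - z3)
     * (24 + 8 * S1 (cyc z1 z2 z3 z4) + 2 * S2 (cyc z1 z2 z3 z4)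
        + Eterm (cyc z1 z2 z3 z4)))%:C.
Proof.
move=> [s [s_sign convex]].
have cyc_mod n : cyc z1 z2 z3 z4 (n %% 4) = cyc z1 z2 z3 z4 n by rewrite /cyc modn_mod.
by rewrite (atiyah_det_convex_quad cyc_mod s_sign convex).
Qed.
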